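(* Let $n\ge2$ and consider the parallel network with unit demand and latencies $\ell_i(x_i)=x_i$ for $i=1,\dots,n-1$ and constant latency $\ell_n(x_n)=\frac{1}{2(n-1)}$. Then for every $c\in\mathbb{R}_+\cup\{\infty\}$ and every $t\in\mathcal{T}(c)$, the induced flow is $x(t)=\left(\frac{1}{2(n-1)},\dots,\frac{1}{2(n-1)},\frac12\right)=x(0)$, while the optimal flow is $x^*=\left(\frac{1}{4(n-1)},\dots,\frac{1}{4(n-1)},\frac34\right)$. Consequently every price cap is optimal and $$\min_{c}\ \frac{C(x(c))}{C(x^* )}=\frac87 .$$
   Context: Flows $x\in\mathbb{R}^n_+$ with $\sum_ix_i=1$; $C(x)=\sum_i\ell_i(x_i)x_i$; $x^*$ minimizes $C$. For tolls $t\in\mathbb{R}^n_+$, $x(t)$ is the unique Wardrop equilibrium for $t$ (for all $i,j$ with $x_i>0$: $\ell_i(x_i)+t_i\le\ell_j(x_j)+t_j$); $x(0)$ is the untolled one. Profit $\Pi_i(t)=t_ix_i(t)$. For $c\in\mathbb{R}_+$, $\mathcal{T}(c)$ is the set of toll vectors with $0\le t_i\le c$ such that for every $i$ and every $t'_i\in[0,c]$, $\Pi_i(t_i,t_{-i})\ge\Pi_i(t'_i,t_{-i})$ (flow recomputed); $\mathcal{T}(\infty)$ is the same without upper bound. $x(c)$ denotes the flow induced by the $c$-capped equilibrium. *)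

From Stdlib Require Import Reals Lra Lia Arith.
Open Scope R_scope.

(* Links are indexed 0 .. n-1; flows/tolls are functions nat -> R,
   only the values at indices < n matter. *)
Fixpoint rsum (n : nat) (f : nat -> R) : R :=
  match n with O => 0 | S m => rsum m f + f m end.

Definition feasible (n : nat) (x : nat -> R) : Prop :=
  (forall i, (i < n)%nat -> 0 <= x i) /\ rsum n x = 1.

Definition wardrop (n : nat) (l : nat -> R -> R) (t x : nat -> R) : Prop :=
  feasible n x /\
  forall i j, (i < n)%nat -> (j < n)%nat -> 0 < x i ->
    l i (x i) + t i <= l j (x j) + t j.

Definition cost (n : nat) (l : nat -> R -> R) (x : nat -> R) : R :=
  rsum n (fun i => l i (x i) * x i).

(* price caps c in R_+ ∪ {∞}: Some c = finite cap, None = ∞ *)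
Definition toll_ok (c : option R) (v : R) : Prop :=
  0 <= v /\ match c with Some c0 => v <= c0 | None => True end.

Definition update (t : nat -> R) (i : nat) (v : R) : nat -> R :=
  fun j => if Nat.eqb j i then v else t j.

(* t ∈ T(c): tolls within [0,c] and no link i can raise its profit
   t_i x_i(t) by a unilateral deviation t'_i ∈ [0,c], flows recomputed as
   Wardrop equilibria (which are unique). *)
Definition in_T (n : nat) (l : nat -> R -> R) (c : option R) (t : nat -> R) : Prop :=
  (forall i, (i < n)%nat -> toll_ok c (t i)) /\
  forall i, (i < n)%nat -> forall v, toll_ok c v ->
    forall x x', wardrop n l t x -> wardrop n l (update t i v) x' ->
      v * x' i <= t i * x i.

Definition lat (n : nat) (i : nat) (y : R) : R :=
  if Nat.ltb i (n - 1) then y else 1 / (2 * (INR n - 1)).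

Definition x_eq (n : nat) (i : nat) : R :=
  if Nat.ltb i (n - 1) then 1 / (2 * (INR n - 1)) else 1 / 2.

Definition x_opt (n : nat) (i : nat) : R :=
  if Nat.ltb i (n - 1) then 1 / (4 * (INR n - 1)) else 3 / 4.

From Stdlib Require Import Reals Lra Lia Arith.
Open Scope R_scope.

(* Write n = m + 1 and a = 1/(2m).  While the constant link is used, the equilibrium
   level is a + t_m and link i < m carries (a + t_m - t_i)^+, so link i faces the
   revenue curve v (L - v)^+ with L = a + t_m and must charge the capped monopoly
   price min(c, L/2).  With all these tolls equal to tau, the constant link earns
   t_m (1/2 - m (t_m - tau)); comparing with the deviation to tau forces t_m = tau,
   so all tolls coincide and the flow is the untolled one.  The constant link is
   indeed used: otherwise it earns nothing, while any toll at most a/2 keeps a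
   quarter of the demand on it.  The optimum follows by completing the square in
   C(y) = sum_{i<m} y_i^2 + a (1 - sum_{i<m} y_i). *)

Lemma rsum_ext k f g : (forall i, (i < k)%nat -> f i = g i) -> rsum k f = rsum k g.
Proof.
  induction k; intros H; simpl; [reflexivity|].
  rewrite IHk by (intros; apply H; lia). rewrite H by lia. reflexivity.
Qed.

Lemma cost_ext n l x y : (forall i, (i < n)%nat -> x i = y i) -> cost n l x = cost n l y.
Proof. intros H. apply rsum_ext. intros i Hi. rewrite H by assumption. reflexivity. Qed.

Lemma rsum_le k f g : (forall i, (i < k)%nat -> f i <= g i) -> rsum k f <= rsum k g.
Proof.
  induction k; intros H; simpl; [lra|].
  assert (rsum k f <= rsum k g) by (apply IHk; intros; apply H; lia).
  assert (f k <= g k) by (apply H; lia). lra.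
Qed.

Lemma rsum_const k c : rsum k (fun _ => c) = INR k * c.
Proof. induction k; simpl rsum; [simpl; ring|]. rewrite IHk, S_INR. ring. Qed.

Lemma rsum_nonneg k f : (forall i, (i < k)%nat -> 0 <= f i) -> 0 <= rsum k f.
Proof.
  intros H. rewrite <- (Rmult_0_r (INR k)), <- rsum_const. apply rsum_le. exact H.
Qed.

Lemma rsum_nonneg_eq0 k f : (forall i, (i < k)%nat -> 0 <= f i) -> rsum k f <= 0 ->
  forall i, (i < k)%nat -> f i = 0.
Proof.
  induction k; intros H Hs i Hi; [lia|]. simpl rsum in Hs.
  assert (0 <= rsum k f) by (apply rsum_nonneg; intros; apply H; lia).
  assert (0 <= f k) by (apply H; lia).
  destruct (Nat.eq_dec i k) as [->|]; [lra|].
  apply IHk; [intros; apply H; lia | lra | lia].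
Qed.

Lemma rsum_update k f g i : (i < k)%nat ->
  (forall j, (j < k)%nat -> j <> i -> g j = f j) ->
  rsum k g = rsum k f - f i + g i.
Proof.
  induction k; intros Hi H; [lia|]. simpl rsum.
  destruct (Nat.eq_dec i k) as [->|].
  - rewrite (rsum_ext k g f) by (intros; apply H; lia). ring.
  - rewrite IHk by (try lia; intros; apply H; lia). rewrite (H k) by lia. ring.
Qed.

Lemma rsum_sqr_shift k y b : rsum k (fun i => y i * y i) =
  rsum k (fun i => (y i - b) * (y i - b)) + 2 * b * rsum k y - INR k * (b * b).
Proof. induction k; simpl rsum; [simpl; ring|]. rewrite IHk, S_INR. ring. Qed.

Lemma update_eq t i v : update t i v i = v.
Proof. unfold update. rewrite Nat.eqb_refl. reflexivity. Qed.

Lemma update_neq t i v j : j <> i -> update t i v j = t j.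
Proof. intros H. unfold update. rewrite (proj2 (Nat.eqb_neq j i) H). reflexivity. Qed.

Definition capmin (c : option R) (w : R) : R :=
  match c with Some c0 => Rmin w c0 | None => w end.

Lemma capmin_le c w : capmin c w <= w.
Proof. destruct c; simpl; [apply Rmin_l | lra]. Qed.

Lemma toll_ok_le c y v : toll_ok c y -> 0 <= v <= y -> toll_ok c v.
Proof. destruct c; unfold toll_ok; intros [Hy Hc] Hv; split; try lra; auto. Qed.

Lemma toll_ok_capmin c w p : 0 <= w -> toll_ok c p -> toll_ok c (capmin c w).
Proof.
  destruct c as [c0|]; simpl; unfold toll_ok; intros Hw [Hp Hc].
  - split; [apply Rmin_glb; lra | apply Rmin_r].
  - split; [lra | exact I].
Qed.

Lemma capmin_lt c w y : toll_ok c y -> capmin c w < y -> w < y.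
Proof.
  destruct c as [c0|]; simpl; unfold toll_ok; [|auto].
  intros [_ Hc] H. unfold Rmin in H. destruct (Rle_dec w c0); lra.
Qed.

(* Deviations may raise the load by at most the slack [s] (beyond that the constant
   link would empty); moving from [p] towards min(c, L/2) within the slack already
   raises the revenue. *)
Lemma capped_monopoly_price c L s p :
  0 < L -> 0 < s -> toll_ok c p ->
  (forall v, toll_ok c v -> Rmax 0 (L - v) <= Rmax 0 (L - p) + s ->
     v * Rmax 0 (L - v) <= p * Rmax 0 (L - p)) ->
  p = capmin c (L / 2).
Proof.
  intros HL Hs Hp Hdev.
  set (tau := capmin c (L / 2)).
  assert (Htau_ok : toll_ok c tau) by (apply (toll_ok_capmin c _ p); [lra | exact Hp]).
  assert (Htau_le : tau <= L / 2) by apply capmin_le.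
  pose proof (proj1 Htau_ok) as Htau0. pose proof (proj1 Hp) as Hp0.
  destruct (Rtotal_order p tau) as [Hlt | [Heq | Hgt]]; [exfalso | exact Heq | exfalso].
  - specialize (Hdev tau Htau_ok).
    rewrite !Rmax_right in Hdev by lra.
    specialize (Hdev ltac:(lra)).
    assert (0 < (tau - p) * (L - tau - p)) by (apply Rmult_lt_0_compat; lra).
    nra.
  - assert (Hhalf : L / 2 < p) by (exact (capmin_lt c _ _ Hp Hgt)).
    destruct (Rlt_dec p L) as [HpL | HpL].
    + set (v := Rmax (L / 2) (p - s)).
      assert (Hv1 : L / 2 <= v) by apply Rmax_l.
      assert (Hv2 : p - s <= v) by apply Rmax_r.
      assert (Hv3 : v < p) by (apply Rmax_lub_lt; lra).
      specialize (Hdev v ltac:(apply (toll_ok_le c p); [exact Hp | split; lra])).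
      rewrite !Rmax_right in Hdev by lra.
      specialize (Hdev ltac:(lra)).
      assert (0 < (p - v) * (p + v - L)) by (apply Rmult_lt_0_compat; lra).
      nra.
    + set (v := Rmax (L / 2) (L - s / 2)).
      assert (Hv1 : L / 2 <= v) by apply Rmax_l.
      assert (Hv2 : L - s / 2 <= v) by apply Rmax_r.
      assert (Hv3 : v < L) by (apply Rmax_lub_lt; lra).
      specialize (Hdev v ltac:(apply (toll_ok_le c p); [exact Hp | split; lra])).
      rewrite Rmax_right, Rmax_left in Hdev by lra.
      specialize (Hdev ltac:(lra)).
      assert (0 < v * (L - v)) by (apply Rmult_lt_0_compat; lra).
      lra.
Qed.

Lemma capped_last_price c M a p tau :
  0 < M -> M * a = 1 / 2 -> toll_ok c p -> tau = capmin c ((a + p) / 2) ->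
  tau * (1 - M * a) <= p * (1 - M * (a + p - tau)) -> p = tau.
Proof.
  intros HM Ha Hp Htau Hdev. rewrite Ha in Hdev.
  destruct (Rtotal_order p tau) as [Hlt | [Heq | Hgt]]; [exfalso | exact Heq | exfalso].
  - assert (Hle : tau <= (a + p) / 2) by (rewrite Htau; apply capmin_le).
    assert (M * p < 1 / 2) by (rewrite <- Ha; apply Rmult_lt_compat_l; lra).
    assert (0 < (tau - p) * (1 / 2 - M * p)) by (apply Rmult_lt_0_compat; lra).
    nra.
  - assert (Hgt' : (a + p) / 2 < p) by (apply (capmin_lt c); [exact Hp | lra]).
    assert (1 / 2 < M * p) by (rewrite <- Ha; apply Rmult_lt_compat_l; lra).
    assert (0 < (p - tau) * (M * p - 1 / 2)) by (apply Rmult_lt_0_compat; lra).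
    nra.
Qed.

Lemma in_T_zero_cap n l : in_T n l (Some 0) (fun _ => 0).
Proof.
  split.
  - intros i _. unfold toll_ok. lra.
  - intros i _ v [Hv0 Hv1] x x' _ _. assert (v = 0) by lra. subst v. lra.
Qed.

Section Instance.

Variable m : nat.
Hypothesis m_pos : (1 <= m)%nat.

Definition const_lat : R := 1 / (2 * INR m).

Lemma INR_m_pos : 0 < INR m.
Proof. apply lt_0_INR. lia. Qed.

Lemma const_lat_pos : 0 < const_lat.
Proof. pose proof INR_m_pos as HM. unfold const_lat. apply Rdiv_lt_0_compat; lra. Qed.

Lemma INR_mul_const_lat : INR m * const_lat = 1 / 2.
Proof. pose proof INR_m_pos as HM. unfold const_lat. field. lra. Qed.

Lemma INR_Sm_sub1 : INR (S m) - 1 = INR m.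
Proof. rewrite S_INR. ring. Qed.

Lemma lat_link i y : (i < m)%nat -> lat (S m) i y = y.
Proof.
  intros H. unfold lat. replace (S m - 1)%nat with m by lia.
  rewrite (proj2 (Nat.ltb_lt i m) H). reflexivity.
Qed.

Lemma lat_last y : lat (S m) m y = const_lat.
Proof.
  unfold lat. replace (S m - 1)%nat with m by lia.
  rewrite Nat.ltb_irrefl, INR_Sm_sub1. reflexivity.
Qed.

Lemma x_eq_link i : (i < m)%nat -> x_eq (S m) i = const_lat.
Proof.
  intros H. unfold x_eq. replace (S m - 1)%nat with m by lia.
  rewrite (proj2 (Nat.ltb_lt i m) H), INR_Sm_sub1. reflexivity.
Qed.

Lemma x_eq_last : x_eq (S m) m = 1 / 2.
Proof.
  unfold x_eq. replace (S m - 1)%nat with m by lia. rewrite Nat.ltb_irrefl. reflexivity.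
Qed.

Lemma x_opt_link i : (i < m)%nat -> x_opt (S m) i = const_lat / 2.
Proof.
  intros H. pose proof INR_m_pos as HM. unfold x_opt, const_lat.
  replace (S m - 1)%nat with m by lia.
  rewrite (proj2 (Nat.ltb_lt i m) H), INR_Sm_sub1. field. lra.
Qed.

Lemma x_opt_last : x_opt (S m) m = 3 / 4.
Proof.
  unfold x_opt. replace (S m - 1)%nat with m by lia. rewrite Nat.ltb_irrefl. reflexivity.
Qed.

Lemma feasible_last y : feasible (S m) y -> y m = 1 - rsum m y.
Proof. intros [_ Hs]. simpl rsum in Hs. lra. Qed.

(** * Equilibria while the constant link is used *)

Definition link_load (t : nat -> R) (i : nat) : R := Rmax 0 (const_lat + t m - t i).

Definition eq_flow (t : nat -> R) (i : nat) : R :=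
  if Nat.ltb i m then link_load t i else 1 - rsum m (link_load t).

Lemma eq_flow_link t i : (i < m)%nat -> eq_flow t i = link_load t i.
Proof. intros H. unfold eq_flow. rewrite (proj2 (Nat.ltb_lt i m) H). reflexivity. Qed.

Lemma eq_flow_last t : eq_flow t m = 1 - rsum m (link_load t).
Proof. unfold eq_flow. rewrite Nat.ltb_irrefl. reflexivity. Qed.

Lemma wardrop_eq_flow t : rsum m (link_load t) <= 1 ->
  wardrop (S m) (lat (S m)) t (eq_flow t).
Proof.
  intros Hsum.
  assert (Hlevel : forall i, (i < S m)%nat ->
    const_lat + t m <= lat (S m) i (eq_flow t i) + t i /\
    (0 < eq_flow t i -> lat (S m) i (eq_flow t i) + t i = const_lat + t m)).
  { intros i Hi. destruct (Nat.eq_dec i m) as [->|Hne].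
    - rewrite lat_last. split; intros; lra.
    - assert (i < m)%nat by lia.
      rewrite lat_link, eq_flow_link by assumption. unfold link_load.
      destruct (Rle_dec 0 (const_lat + t m - t i)).
      + rewrite Rmax_right by assumption. split; intros; lra.
      + rewrite Rmax_left by lra. split; intros; lra. }
  split; [split|].
  - intros i Hi. destruct (Nat.eq_dec i m) as [->|].
    + rewrite eq_flow_last. lra.
    + rewrite eq_flow_link by lia. apply Rmax_l.
  - simpl rsum.
    rewrite eq_flow_last, (rsum_ext m _ (link_load t)) by exact (eq_flow_link t).
    ring.
  - intros i j Hi Hj Hpos.
    rewrite (proj2 (Hlevel i Hi) Hpos). exact (proj1 (Hlevel j Hj)).
Qed.

Lemma wardrop_eq_flow_unique t x : wardrop (S m) (lat (S m)) t x -> 0 < x m ->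
  forall i, (i < S m)%nat -> x i = eq_flow t i.
Proof.
  intros Hx Hxm.
  assert (Hlinks : forall i, (i < m)%nat -> x i = eq_flow t i).
  { destruct Hx as [[Hnn _] Hw]. intros i Hi.
    pose proof (Hw m i ltac:(lia) ltac:(lia) Hxm) as Hm_level.
    rewrite lat_last, lat_link in Hm_level by assumption.
    pose proof (Hnn i ltac:(lia)).
    rewrite eq_flow_link by assumption. unfold link_load.
    destruct (Rlt_dec 0 (x i)) as [Hp|Hp].
    + pose proof (Hw i m ltac:(lia) ltac:(lia) Hp) as Hi_level.
      rewrite lat_last, lat_link in Hi_level by assumption.
      rewrite Rmax_right; lra.
    + rewrite Rmax_left; lra. }
  intros i Hi. destruct (Nat.eq_dec i m) as [->|]; [|apply Hlinks; lia].
  rewrite (feasible_last x (proj1 Hx)), eq_flow_last.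
  rewrite (rsum_ext m x (eq_flow t)) by exact Hlinks.
  rewrite (rsum_ext m (eq_flow t) (link_load t)) by exact (eq_flow_link t). reflexivity.
Qed.

Lemma eq_flow_const t tau : (forall i, (i < S m)%nat -> t i = tau) ->
  forall i, (i < S m)%nat -> eq_flow t i = x_eq (S m) i.
Proof.
  intros Ht.
  assert (Hload : forall i, (i < m)%nat -> link_load t i = const_lat).
  { intros i Hi. pose proof const_lat_pos as Ha. unfold link_load. rewrite !Ht by lia.
    rewrite Rmax_right; lra. }
  intros i Hi. destruct (Nat.eq_dec i m) as [->|].
  - rewrite eq_flow_last, x_eq_last, (rsum_ext m _ (fun _ => const_lat)) by exact Hload.
    rewrite rsum_const, INR_mul_const_lat. lra.
  - rewrite eq_flow_link, x_eq_link, Hload by lia. reflexivity.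
Qed.

(* With the constant link empty, each link i < m carries at most a + t_m, so the unit
   demand forces m (a + t_m) >= 1. *)
Lemma last_unused_toll_ge t x : (forall i, (i < S m)%nat -> 0 <= t i) ->
  wardrop (S m) (lat (S m)) t x -> x m = 0 -> const_lat <= t m.
Proof.
  intros Ht [[Hnn Hsum] Hw] Hx0.
  pose proof const_lat_pos as Ha. pose proof INR_m_pos as HM.
  assert (Hle : rsum m x <= rsum m (fun _ => const_lat + t m)).
  { apply rsum_le. intros i Hi. pose proof (Ht i ltac:(lia)). pose proof (Ht m ltac:(lia)).
    destruct (Rlt_dec 0 (x i)) as [Hp|Hp]; [|lra].
    pose proof (Hw i m ltac:(lia) ltac:(lia) Hp) as Hi_level.
    rewrite lat_last, lat_link in Hi_level by assumption. lra. }
  rewrite rsum_const, Rmult_plus_distr_l, INR_mul_const_lat in Hle.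
  simpl rsum in Hsum. rewrite Hx0 in Hsum.
  destruct (Rle_lt_dec const_lat (t m)) as [|Hlt]; [assumption|].
  assert (INR m * t m < INR m * const_lat) by (apply Rmult_lt_compat_l; lra).
  rewrite INR_mul_const_lat in *. lra.
Qed.

Lemma untolled_equilibrium x : wardrop (S m) (lat (S m)) (fun _ => 0) x ->
  forall i, (i < S m)%nat -> x i = x_eq (S m) i.
Proof.
  intros Hx i Hi. pose proof const_lat_pos as Ha.
  assert (Hxm : 0 < x m).
  { destruct (Rlt_dec 0 (x m)) as [|Hn]; [assumption|].
    pose proof (proj1 (proj1 Hx) m ltac:(lia)).
    pose proof (last_unused_toll_ge _ x (fun _ _ => Rle_refl 0) Hx ltac:(lra)). lra. }
  rewrite (wardrop_eq_flow_unique _ x Hx Hxm i Hi).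
  exact (eq_flow_const _ 0 (fun _ _ => eq_refl) i Hi).
Qed.

(** * Deviations from an equilibrium in T(c) *)

Lemma profit_last_deviation c t x v : in_T (S m) (lat (S m)) c t ->
  wardrop (S m) (lat (S m)) t x -> toll_ok c v ->
  rsum m (link_load (update t m v)) <= 1 ->
  v * (1 - rsum m (link_load (update t m v))) <= t m * x m.
Proof.
  intros [_ HT] Hx Hv Hs.
  pose proof (HT m ltac:(lia) v Hv x _ Hx (wardrop_eq_flow _ Hs)) as H.
  rewrite eq_flow_last in H. exact H.
Qed.

Lemma link_load_update_last t v j : (j < m)%nat ->
  link_load (update t m v) j = Rmax 0 (const_lat + v - t j).
Proof. intros Hj. unfold link_load. rewrite update_eq, update_neq by lia. reflexivity. Qed.

Lemma profit_link_deviation c t x i v : in_T (S m) (lat (S m)) c t ->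
  wardrop (S m) (lat (S m)) t x -> 0 < x m -> (i < m)%nat -> toll_ok c v ->
  Rmax 0 (const_lat + t m - v) <= link_load t i + x m ->
  v * Rmax 0 (const_lat + t m - v) <= t i * link_load t i.
Proof.
  intros HT Hx Hxm Hi Hv Hle.
  assert (Hload : forall j, (j < m)%nat -> j <> i ->
    link_load (update t i v) j = link_load t j).
  { intros j Hj Hne. unfold link_load. rewrite !update_neq by lia. reflexivity. }
  assert (Hload_i : link_load (update t i v) i = Rmax 0 (const_lat + t m - v)).
  { unfold link_load. rewrite update_eq, update_neq by lia. reflexivity. }
  assert (Hsum : rsum m (link_load (update t i v)) <= 1).
  { rewrite (rsum_update m (link_load t) _ i Hi Hload), Hload_i.
    pose proof (wardrop_eq_flow_unique t x Hx Hxm m ltac:(lia)) as E.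
    rewrite eq_flow_last in E. lra. }
  pose proof (proj2 HT i ltac:(lia) v Hv x _ Hx (wardrop_eq_flow _ Hsum)) as H.
  rewrite eq_flow_link, Hload_i, (wardrop_eq_flow_unique t x Hx Hxm i),
    eq_flow_link in H by lia.
  exact H.
Qed.

Lemma last_link_used c t x : in_T (S m) (lat (S m)) c t ->
  wardrop (S m) (lat (S m)) t x -> 0 < x m.
Proof.
  intros HT Hx. pose proof const_lat_pos as Ha. pose proof INR_m_pos as HM.
  destruct (Rlt_dec 0 (x m)) as [|Hn]; [assumption|exfalso].
  pose proof (proj1 (proj1 Hx) m ltac:(lia)).
  assert (Ht : forall i, (i < S m)%nat -> 0 <= t i) by (intros i Hi; apply (proj1 HT i Hi)).
  pose proof (last_unused_toll_ge t x Ht Hx ltac:(lra)) as Hge.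
  set (v := capmin c (const_lat / 2)).
  assert (Hv_ok : toll_ok c v) by (apply (toll_ok_capmin c _ (t m)); [lra | apply HT; lia]).
  assert (Hv_le : v <= const_lat / 2) by apply capmin_le.
  assert (Hv_pos : 0 < v).
  { unfold v. destruct c as [c0|]; simpl; [|lra].
    destruct (proj1 HT m ltac:(lia)) as [_ Hc0]. apply Rmin_glb_lt; lra. }
  assert (Hs : rsum m (link_load (update t m v)) <= INR m * (const_lat + v)).
  { rewrite <- rsum_const. apply rsum_le. intros j Hj.
    rewrite link_load_update_last by assumption.
    apply Rmax_lub; [lra|]. pose proof (Ht j ltac:(lia)). lra. }
  assert (INR m * v <= INR m * const_lat / 2) by (unfold Rdiv; rewrite Rmult_assoc;
    apply Rmult_le_compat_l; lra).
  rewrite Rmult_plus_distr_l, INR_mul_const_lat in *.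
  pose proof (profit_last_deviation c t x v HT Hx Hv_ok ltac:(lra)) as Hprofit.
  replace (x m) with 0 in Hprofit by lra. nra.
Qed.

Lemma link_tolls_monopoly c t x : in_T (S m) (lat (S m)) c t ->
  wardrop (S m) (lat (S m)) t x ->
  forall i, (i < m)%nat -> t i = capmin c ((const_lat + t m) / 2).
Proof.
  intros HT Hx i Hi. pose proof const_lat_pos as Ha.
  pose proof (last_link_used c t x HT Hx) as Hxm.
  pose proof (proj1 (proj1 HT m ltac:(lia))).
  apply (capped_monopoly_price c _ (x m)); [lra | exact Hxm | apply HT; lia |].
  intros v Hv Hle. exact (profit_link_deviation c t x i v HT Hx Hxm Hi Hv Hle).
Qed.

Theorem tolled_equilibrium_untolled c t x : in_T (S m) (lat (S m)) c t ->
  wardrop (S m) (lat (S m)) t x -> forall i, (i < S m)%nat -> x i = x_eq (S m) i.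
Proof.
  intros HT Hx. pose proof const_lat_pos as Ha. pose proof INR_m_pos as HM.
  pose proof (proj1 (proj1 HT m ltac:(lia))) as Htm.
  set (tau := capmin c ((const_lat + t m) / 2)).
  assert (Htau_le : tau <= (const_lat + t m) / 2) by apply capmin_le.
  pose proof (link_tolls_monopoly c t x HT Hx) as Hlinks. fold tau in Hlinks.
  assert (Hload : forall v, const_lat + v - tau >= 0 ->
    rsum m (fun j => Rmax 0 (const_lat + v - t j)) = INR m * (const_lat + v - tau)).
  { intros v Hv. rewrite <- rsum_const. apply rsum_ext. intros j Hj.
    rewrite Hlinks by assumption. apply Rmax_right. lra. }
  assert (Hlast : t m = tau).
  { apply (capped_last_price c (INR m) const_lat (t m) tau);
      [lra | exact INR_mul_const_lat | apply HT; lia | reflexivity |].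
    assert (Hdev : rsum m (link_load (update t m tau)) = INR m * const_lat).
    { rewrite (rsum_ext m _ (fun j => Rmax 0 (const_lat + tau - t j)))
        by exact (link_load_update_last t tau).
      rewrite Hload by lra. f_equal. ring. }
    assert (Htol : toll_ok c tau)
      by (apply (toll_ok_capmin c _ (t m)); [lra | apply HT; lia]).
    pose proof (profit_last_deviation c t x tau HT Hx Htol) as Hprofit.
    rewrite Hdev, INR_mul_const_lat in Hprofit.
    rewrite (wardrop_eq_flow_unique t x Hx (last_link_used c t x HT Hx) m), eq_flow_last
      in Hprofit by lia.
    unfold link_load in Hprofit. rewrite (Hload (t m)) in Hprofit by lra.
    rewrite INR_mul_const_lat. apply Hprofit. lra. }
  intros i Hi.
  rewrite (wardrop_eq_flow_unique t x Hx (last_link_used c t x HT Hx) i Hi).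
  apply (eq_flow_const t tau); [|exact Hi].
  intros j Hj. destruct (Nat.eq_dec j m) as [->|]; [exact Hlast | apply Hlinks; lia].
Qed.

Lemma cost_split y :
  cost (S m) (lat (S m)) y = rsum m (fun i => y i * y i) + const_lat * y m.
Proof.
  unfold cost. simpl rsum. rewrite lat_last. f_equal. apply rsum_ext. intros i Hi.
  rewrite lat_link by assumption. reflexivity.
Qed.

Lemma cost_square y : feasible (S m) y -> cost (S m) (lat (S m)) y =
  rsum m (fun i => (y i - const_lat / 2) * (y i - const_lat / 2))
  + const_lat - INR m * (const_lat / 2 * (const_lat / 2)).
Proof.
  intros Hy. rewrite cost_split, (rsum_sqr_shift m y (const_lat / 2)), (feasible_last y Hy).
  field.
Qed.

Lemma cost_x_eq : cost (S m) (lat (S m)) (x_eq (S m)) = const_lat.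
Proof.
  rewrite cost_split, x_eq_last, (rsum_ext m _ (fun _ => const_lat * const_lat))
    by (intros i Hi; rewrite x_eq_link by assumption; reflexivity).
  rewrite rsum_const, <- Rmult_assoc, INR_mul_const_lat. field.
Qed.

Lemma cost_x_opt : cost (S m) (lat (S m)) (x_opt (S m)) = 7 / 8 * const_lat.
Proof.
  rewrite cost_split, x_opt_last, (rsum_ext m _ (fun _ => const_lat * const_lat / 4))
    by (intros i Hi; rewrite x_opt_link by assumption; field).
  rewrite rsum_const.
  replace (INR m * (const_lat * const_lat / 4)) with (INR m * const_lat * const_lat / 4)
    by field.
  rewrite INR_mul_const_lat. field.
Qed.

Lemma feasible_x_opt : feasible (S m) (x_opt (S m)).
Proof.
  pose proof const_lat_pos as Ha. split.
  - intros i Hi. destruct (Nat.eq_dec i m) as [->|].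
    + rewrite x_opt_last. lra.
    + rewrite x_opt_link by lia. lra.
  - simpl rsum. rewrite x_opt_last, (rsum_ext m _ (fun _ => const_lat / 2))
      by exact x_opt_link.
    rewrite rsum_const.
    replace (INR m * (const_lat / 2)) with (INR m * const_lat / 2) by field.
    rewrite INR_mul_const_lat. lra.
Qed.

Lemma x_opt_square_zero :
  rsum m (fun i => (x_opt (S m) i - const_lat / 2) * (x_opt (S m) i - const_lat / 2)) = 0.
Proof.
  rewrite (rsum_ext m _ (fun _ => 0)), rsum_const; [ring|].
  intros i Hi. rewrite x_opt_link by assumption. ring.
Qed.

Lemma x_opt_minimal y : feasible (S m) y ->
  cost (S m) (lat (S m)) (x_opt (S m)) <= cost (S m) (lat (S m)) y.
Proof.
  intros Hy. rewrite !cost_square, x_opt_square_zero by (exact feasible_x_opt || exact Hy).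
  assert (0 <= rsum m (fun i => (y i - const_lat / 2) * (y i - const_lat / 2)))
    by (apply rsum_nonneg; intros; apply Rle_0_sqr).
  lra.
Qed.

Lemma x_opt_unique y : feasible (S m) y ->
  cost (S m) (lat (S m)) y <= cost (S m) (lat (S m)) (x_opt (S m)) ->
  forall i, (i < S m)%nat -> y i = x_opt (S m) i.
Proof.
  intros Hy Hle. rewrite !cost_square, x_opt_square_zero in Hle
    by (exact feasible_x_opt || exact Hy).
  assert (Hlinks : forall i, (i < m)%nat -> y i = const_lat / 2).
  { intros i Hi.
    pose proof (rsum_nonneg_eq0 m (fun i => (y i - const_lat / 2) * (y i - const_lat / 2))
      ltac:(intros; apply Rle_0_sqr) ltac:(lra) i Hi) as Hz.
    destruct (Rmult_integral _ _ Hz); lra. }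
  intros i Hi. destruct (Nat.eq_dec i m) as [->|].
  - rewrite x_opt_last, (feasible_last y Hy), (rsum_ext m y (fun _ => const_lat / 2) Hlinks),
      rsum_const.
    replace (INR m * (const_lat / 2)) with (INR m * const_lat / 2) by field.
    rewrite INR_mul_const_lat. lra.
  - rewrite x_opt_link, Hlinks by lia. reflexivity.
Qed.

End Instance.

Theorem mainTheorem14 (n : nat) (hn : (2 <= n)%nat) :
  (forall x, wardrop n (lat n) (fun _ => 0) x ->
     forall i, (i < n)%nat -> x i = x_eq n i) /\
  (feasible n (x_opt n) /\
   (forall y, feasible n y -> cost n (lat n) (x_opt n) <= cost n (lat n) y) /\
   (forall y, feasible n y -> cost n (lat n) y <= cost n (lat n) (x_opt n) ->
      forall i, (i < n)%nat -> y i = x_opt n i)) /\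
  (forall (c : option R) (t : nat -> R), (forall c0, c = Some c0 -> 0 <= c0) ->
     in_T n (lat n) c t ->
     forall x, wardrop n (lat n) t x ->
       (forall i, (i < n)%nat -> x i = x_eq n i) /\
       cost n (lat n) x / cost n (lat n) (x_opt n) = 8 / 7) /\
  (exists (c : option R) (t : nat -> R),
     (forall c0, c = Some c0 -> 0 <= c0) /\ in_T n (lat n) c t).
Proof.
  destruct n as [|m]; [lia|]. assert (Hm : (1 <= m)%nat) by lia.
  split; [|split; [|split]].
  - exact (untolled_equilibrium m Hm).
  - split; [|split].
    + exact (feasible_x_opt m Hm).
    + exact (x_opt_minimal m Hm).
    + exact (x_opt_unique m Hm).
  -
    intros c t _ HT x Hx.
    pose proof (tolled_equilibrium_untolled m Hm c t x HT Hx) as E.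
    split; [exact E|].
    rewrite (cost_ext _ _ x _ E), cost_x_eq, cost_x_opt by exact Hm.
    pose proof (const_lat_pos m Hm). field. lra.
  - exists (Some 0), (fun _ => 0).
    split; [intros c0 H; injection H; lra | apply in_T_zero_cap].
Qed.
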